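(* Let $\mathbb{G}$ be a streaming graph, $W$ a time window and $Q$ a query graph. An incoming edge $\sigma$ arriving at time $t_i$ is not discardable if and only if, in the current snapshot $\mathbb{G}_i$, there exists at least one query edge $\epsilon\in E(Q)$ such that (1) the prerequisite subquery $Preq(\epsilon)$ has at least one time-constrained match $g$ (a subgraph of $\mathbb{G}_i$) containing $\sigma$, and (2) $\sigma$ is matched to $\epsilon$ in the match relation between $g$ and $Preq(\epsilon)$. Otherwise $\sigma$ is discardable.
   Context: A streaming graph $\mathbb{G}$ is a constantly growing sequence of directed edges $\sigma_1,\sigma_2,\dots$, each with two labelled endpoints and arriving at time $t_i$ (its timestamp), $t_i<t_j$ for $i<j$. With a time window of duration $|W|$, the snapshot at current time $t$ consists of the edges with timestamps in $(t-|W|,t]$ and their endpoints. A query graph is $Q=(V(Q),E(Q),L,\prec)$: vertices, directed edges, vertex labelling $L$, and a strict partial order $\prec$ on $E(Q)$. A subgraph $g$ of the snapshot is a time-constrained match of a query (or subquery with the restricted timing order) if there is a bijection $F$ from the query vertices to $V(g)$ preserving labels, with $\overrightarrow{uv}$ a query edge iff $\overrightarrow{F(u)F(v)}\in E(g)$, and such that $\epsilon\prec\epsilon'$ implies the data edge matched to $\epsilon$ has smaller timestamp than the data edge matched to $\epsilon'$. An incoming edge $\sigma$ is discardable if $\sigma$ cannot be included in any complete time-constrained match of $Q$, no matter what edges arrive in the future. For $\epsilon\in E(Q)$, $Preq(\epsilon)=\{\epsilon' : \epsilon'\prec\epsilon\}\cup\{\epsilon\}$, and the prerequisite subquery $Preq(\epsilon)$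 is the subquery of $Q$ induced by these edges (with timing order $\prec$ restricted to them). *)

From HB Require Import structures.
From mathcomp Require Import all_boot all_order all_algebra.
Set Implicit Arguments. Unset Strict Implicit. Unset Printing Implicit Defensive.
Import Order.TTheory GRing.Theory Num.Theory.
Local Open Scope ring_scope.

(* A data vertex is an identifier paired with its label; its label is [.2]. *)
Definition dvertex (L : Type) := (nat * L)%type.

Record sedge (L : Type) (R : Type) :=
  SEdge { esrc : dvertex L; edst : dvertex L; etime : R }.

(* A streaming graph: sigma_0, sigma_1, ... (edges are identified by index). *)
Definition stream (L : Type) (R : realFieldType) := nat -> sedge L R.

Definition increasing_times (L : Type) (R : realFieldType) (s : stream L R) :=
  forall i j : nat, (i < j)%N -> etime (s i) < etime (s j).

Definition in_snapshot (L : Type) (R : realFieldType) (s : stream L R)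
  (W t : R) (k : nat) := t - W < etime (s k) <= t.

Record query (L : eqType) := Query {
  qV : finType;
  qlab : qV -> L;
  qE : {set qV * qV};
  qprec : rel (qV * qV) }.
Arguments qlab {L} q _.
Arguments qE {L} q.
Arguments qprec {L} q _ _.

Definition strict_po (L : eqType) (Q : query L) :=
  (forall e, e \in qE Q -> ~~ qprec Q e e) /\
  (forall e1 e2 e3, e1 \in qE Q -> e2 \in qE Q -> e3 \in qE Q ->
     qprec Q e1 e2 -> qprec Q e2 e3 -> qprec Q e1 e3).

Definition qverts (L : eqType) (Q : query L) (S : {set qV Q * qV Q}) :
  {set qV Q} := [set u | [exists e in S, (e.1 == u) || (e.2 == u)]].

Arguments qverts {L} Q S.

Definition Preq (L : eqType) (Q : query L) (eps : qV Q * qV Q) :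
  {set qV Q * qV Q} := [set e in qE Q | qprec Q e eps] :|: [set eps].

Arguments Preq {L} Q eps.

(* F is the vertex
   bijection onto V(g), M e is the data edge matched to query edge e, and
   the matched subgraph g is the image of S under M. *)
Definition tc_match (L : eqType) (R : realFieldType) (s : stream L R) (W t : R)
  (Q : query L) (S : {set qV Q * qV Q})
  (F : qV Q -> dvertex L) (M : qV Q * qV Q -> nat) :=
  {in qverts Q S &, injective F} /\
  (forall u, u \in qverts Q S -> (F u).2 = qlab Q u) /\
  (forall e, e \in S ->
     [/\ in_snapshot s W t (M e), esrc (s (M e)) = F e.1 & edst (s (M e)) = F e.2]) /\
  (forall e e', e \in S -> e' \in S -> qprec Q e e' ->
     etime (s (M e)) < etime (s (M e'))).

Arguments tc_match {L R} s W t Q S F M.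

(* sigma_i is discardable: whatever edges arrive after sigma_i, at no later
   time does a complete time-constrained match of Q contain sigma_i. *)
Definition discardable (L : eqType) (R : realFieldType) (s : stream L R)
  (W : R) (Q : query L) (i : nat) :=
  forall s' : stream L R,
    (forall k, (k <= i)%N -> s' k = s k) -> increasing_times s' ->
    forall j, (i <= j)%N ->
    forall F M, tc_match s' W (etime (s' j)) Q (qE Q) F M ->
    forall e, e \in qE Q -> M e <> i.

(* If sigma_i is matched to eps in a complete match at some later time, then
   every query edge of Preq(eps) is matched to an edge no later than sigma_i,
   so these edges were already present, within the window, at time t_i.
   Conversely, a match of Preq(eps) at t_i sending eps to sigma_i extends to a
   complete match: the remaining query edges are fed as new edges right after
   sigma_i, in the order of a linear extension of the timing order, with fresh
   vertices for the unmatched query vertices and with time steps so small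
   that the old edges stay inside the window.  No edge outside Preq(eps) precedes an edge of Preq(eps), so
   the fresh edges, all later than sigma_i, respect the timing order. *)

From HB Require Import structures.
From mathcomp Require Import all_boot all_order all_algebra.
From mathcomp Require Import zify lra.
From Stdlib Require Import Classical.
Set Implicit Arguments. Unset Strict Implicit. Unset Printing Implicit Defensive.
Import Order.TTheory GRing.Theory Num.Theory.
Local Open Scope ring_scope.

Section IncreasingStream.
Variables (L : Type) (R : realFieldType) (s : stream L R).
Hypothesis s_incr : increasing_times s.

Lemma ltr_etime a b : (etime (s a) < etime (s b)) = (a < b)%N.
Proof.
case: (ltngtP a b) => [ab|ba|->]; last by rewrite ltxx.
- exact: s_incr.
- by apply/negbTE; rewrite -leNgt ltW // s_incr.
Qed.

Lemma ler_etime a b : (etime (s a) <= etime (s b)) = (a <= b)%N.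
Proof. by rewrite leNgt ltr_etime -leqNgt. Qed.

Lemma snapshot_slack (W t0 : R) k0 : in_snapshot s W t0 k0 ->
  exists2 delta, 0 < delta & forall k t, in_snapshot s W t0 k ->
    t0 <= t <= t0 + delta -> in_snapshot s W t k.
Proof.
move=> k0_in; have ex_in : exists k, in_snapshot s W t0 k by exists k0.
case: (ex_minnP ex_in) => kmin /andP[kmin_lo _] kmin_min.
exists ((etime (s kmin) - (t0 - W)) / 2) => [|k t /[dup] /kmin_min kmin_k].
  by rewrite divr_gt0 // subr_gt0.
move: kmin_k; rewrite -ler_etime /in_snapshot => ? /andP[_ ?] /andP[? ?].
apply/andP; split; lra.
Qed.

End IncreasingStream.

Definition extend_stream (L : Type) (R : realFieldType) (s : stream L R) (i : nat)
    (d : R) (ends : nat -> dvertex L * dvertex L) : stream L R :=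
  fun k => if (k <= i)%N then s k
           else SEdge (ends k).1 (ends k).2 (etime (s i) + (k - i)%:R * d).

Section ExtendStream.
Variables (L : Type) (R : realFieldType) (s : stream L R) (i : nat) (d : R).
Variable ends : nat -> dvertex L * dvertex L.
Local Notation s' := (extend_stream s i d ends).

Lemma extend_stream_prefix k : (k <= i)%N -> s' k = s k.
Proof. by rewrite /extend_stream => ->. Qed.

Lemma extend_stream_suffix k : (i < k)%N ->
  s' k = SEdge (ends k).1 (ends k).2 (etime (s i) + (k - i)%:R * d).
Proof. by move=> ik; rewrite /extend_stream leqNgt ik. Qed.

Lemma etime_extend_stream k : (i <= k)%N ->
  etime (s' k) = etime (s i) + (k - i)%:R * d.
Proof.
rewrite leq_eqVlt => /orP[/eqP<-|/extend_stream_suffix-> //].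
by rewrite extend_stream_prefix // subnn mul0r addr0.
Qed.

Lemma extend_stream_increasing :
  increasing_times s -> 0 < d -> increasing_times s'.
Proof.
move=> s_incr d_gt0 a b ab; case: (leqP b i) => bi.
  by rewrite !extend_stream_prefix ?s_incr //; exact: leq_trans (ltnW ab) bi.
rewrite (etime_extend_stream (ltnW bi)).
have : 0 < (b - i)%:R * d by rewrite mulr_gt0 // ltr0n subn_gt0.
case: (leqP a i) => ai.
  by move: (ai); rewrite extend_stream_prefix // -(ler_etime s_incr); lra.
rewrite (etime_extend_stream (ltnW ai)) ltrD2l ltr_pM2r // ltr_nat; lia.
Qed.

End ExtendStream.

Section QueryFacts.
Variables (L : eqType) (Q : query L).
Implicit Types (S : {set qV Q * qV Q}) (e eps : qV Q * qV Q).

Lemma qvertsS S1 S2 : S1 \subset S2 -> qverts Q S1 \subset qverts Q S2.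
Proof.
move=> /subsetP S12; apply/subsetP => u; rewrite !inE => /existsP[e /andP[Se Hu]].
by apply/existsP; exists e; rewrite S12.
Qed.

Lemma qverts_src S e : e \in S -> e.1 \in qverts Q S.
Proof. by move=> Se; rewrite inE; apply/existsP; exists e; rewrite Se eqxx. Qed.

Lemma qverts_dst S e : e \in S -> e.2 \in qverts Q S.
Proof. by move=> Se; rewrite inE; apply/existsP; exists e; rewrite Se eqxx orbT. Qed.

Lemma Preq_id eps : eps \in Preq Q eps.
Proof. by rewrite !inE eqxx orbT. Qed.

Lemma Preq_sub eps : eps \in qE Q -> Preq Q eps \subset qE Q.
Proof. by move=> Eeps; apply/subsetP => e; rewrite !inE => /orP[/andP[]|/eqP->]. Qed.

Lemma Preq_prec_closed eps e e' : strict_po Q -> eps \in qE Q ->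
  e \in qE Q -> e' \in Preq Q eps -> qprec Q e e' -> e \in Preq Q eps.
Proof.
move=> [_ prec_trans] Eeps Ee; rewrite !inE Ee => /orP[/andP[Ee' e'eps] ee'|/eqP-> ->//].
by rewrite (prec_trans _ _ _ Ee Ee' Eeps ee' e'eps).
Qed.

End QueryFacts.

Section MatchFacts.
Variables (L : eqType) (R : realFieldType) (Q : query L).
Implicit Types (s : stream L R) (S : {set qV Q * qV Q}).

Lemma tc_matchS s W t S1 S2 F M : S1 \subset S2 ->
  tc_match s W t Q S2 F M -> tc_match s W t Q S1 F M.
Proof.
move=> S12 [F_inj [F_lab [M_edge M_prec]]]; have /subsetP V12 := qvertsS S12.
move/subsetP: S12 => S12.
split; first by move=> u v /V12 Vu /V12 Vv; exact: F_inj.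
split; first by move=> u /V12; exact: F_lab.
by split=> [e /S12|e e' /S12 Se /S12]; [exact: M_edge | exact: M_prec].
Qed.

Lemma tc_match_transfer s s' W W' t t' S F M :
  tc_match s' W' t' Q S F M ->
  (forall e, e \in S -> s' (M e) = s (M e) /\ in_snapshot s W t (M e)) ->
  tc_match s W t Q S F M.
Proof.
move=> [F_inj [F_lab [M_edge M_prec]]] same.
do 2!split => //; split=> [e Se|e e' Se Se'].
  by have [<- ?] := same e Se; have [_ ? ?] := M_edge e Se.
by have [<- _] := same e Se; have [<- _] := same e' Se'; exact: M_prec.
Qed.

Lemma tc_match_Preq_le s W t S F M eps e :
  tc_match s W t Q S F M -> Preq Q eps \subset S -> e \in Preq Q eps ->
  etime (s (M e)) <= etime (s (M eps)).
Proof.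
move=> [_ [_ [_ M_prec]]] /subsetP PS Pe; have := Pe.
rewrite !inE => /orP[/andP[_ e_eps]|/eqP-> //].
by apply/ltW/M_prec; rewrite ?PS ?Preq_id.
Qed.

End MatchFacts.

Lemma Preq_match_of_extension (L : eqType) (R : realFieldType) (s s' : stream L R)
    (W : R) (Q : query L) (i j : nat) F M eps :
  increasing_times s' -> (forall k, (k <= i)%N -> s' k = s k) -> (i <= j)%N ->
  tc_match s' W (etime (s' j)) Q (qE Q) F M -> eps \in qE Q -> M eps = i ->
  tc_match s W (etime (s i)) Q (Preq Q eps) F M.
Proof.
move=> s'_incr prefix ij match_Q Eeps Meps.
have match_P := tc_matchS (Preq_sub Eeps) match_Q.
apply: (tc_match_transfer match_P) => e Pe.
have e_before : etime (s' (M e)) <= etime (s' i).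
  by rewrite -Meps (tc_match_Preq_le match_P).
have Mei : (M e <= i)%N by rewrite -(ler_etime s'_incr).
have ti_tj : etime (s' i) <= etime (s' j) by rewrite ler_etime.
have [/andP[e_late _] _ _] := match_P.2.2.1 e Pe.
move: e_before ti_tj e_late; rewrite (prefix _ Mei) prefix // /in_snapshot => *.
split=> //; apply/andP; split; lra.
Qed.

Lemma exists_linear_extension (T : finType) (A : {set T}) (r : rel T) :
  (forall x, x \in A -> ~~ r x x) ->
  (forall x y z, x \in A -> y \in A -> z \in A -> r x y -> r y z -> r x z) ->
  exists code : T -> nat,
    injective code /\ {in A &, forall x y, r x y -> (code x < code y)%N}.
Proof.
move=> r_irr r_trans.
pose rank x := #|[set y in A | r y x]|.
have rank_mono : {in A &, forall x y, r x y -> (rank x < rank y)%N}.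
  move=> x y Ax Ay rxy; apply/proper_card/properP; split.
    by apply/subsetP => z; rewrite !inE => /andP[Az rzx]; rewrite Az (r_trans z x y).
  by exists x; rewrite !inE ?Ax ?rxy // (negbTE (r_irr x Ax)).
exists (fun x => rank x * #|T| + enum_rank x)%N; split.
  move=> x y /(congr1 (modn^~ #|T|)); rewrite !modnMDl !modn_small //.
  by move/val_inj/enum_rank_inj.
move=> x y Ax Ay /(rank_mono x y Ax Ay) lt_rank.
apply: (@leq_trans ((rank x).+1 * #|T|)).
  by rewrite mulSn addnC ltn_add2r.
by rewrite (leq_trans _ (leq_addr _ _)) // leq_mul2r lt_rank orbT.
Qed.

Lemma exists_injective_extension (L : Type) (T : finType) (V : {set T})
    (lab : T -> L) (F : T -> nat * L) :
  {in V &, injective F} -> {in V, forall u, (F u).2 = lab u} ->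
  exists F' : T -> nat * L,
    [/\ injective F', forall u, (F' u).2 = lab u & {in V, F' =1 F}].
Proof.
move=> F_inj F_lab; pose X := (\max_(u in V) (F u).1).+1.
have F_lt_X u : u \in V -> ((F u).1 < X)%N by move=> Vu; rewrite ltnS leq_bigmax_cond.
exists (fun u => if u \in V then F u else ((X + enum_rank u)%N, lab u)).
split=> [u v|u|u ->//]; last by case: ifP => // /F_lab.
case: ifP => Vu; case: ifP => Vv.
- exact: F_inj.
- by move=> Fuv; have := F_lt_X u Vu; rewrite Fuv /= ltnNge leq_addr.
- by move=> Fuv; have := F_lt_X v Vv; rewrite -Fuv /= ltnNge leq_addr.
- by case=> /addnI /val_inj /enum_rank_inj.
Qed.

Section PreqMatchExtension.
Variables (L : eqType) (R : realFieldType) (s : stream L R) (W : R) (Q : query L).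
Variables (i : nat) (eps : qV Q * qV Q) (F : qV Q -> dvertex L).
Variable M : qV Q * qV Q -> nat.
Hypotheses (s_incr : increasing_times s) (W_gt0 : 0 < W) (Q_po : strict_po Q).
Hypotheses (Eeps : eps \in qE Q) (Meps : M eps = i).
Hypothesis match_P : tc_match s W (etime (s i)) Q (Preq Q eps) F M.

Variable code : qV Q * qV Q -> nat.
Hypothesis code_inj : injective code.
Hypothesis code_mono :
  {in qE Q &, forall e e', qprec Q e e' -> (code e < code e')%N}.

Variable F' : qV Q -> dvertex L.
Hypotheses (F'_inj : injective F') (F'_lab : forall u, (F' u).2 = qlab Q u).
Hypothesis F'_F : {in qverts Q (Preq Q eps), F' =1 F}.

Variable delta : R.
Hypothesis delta_gt0 : 0 < delta.
Hypothesis delta_slack : forall k t, in_snapshot s W (etime (s i)) k ->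
  etime (s i) <= t <= etime (s i) + delta -> in_snapshot s W t k.

Local Notation P := (Preq Q eps).

Let pos e := (i.+1 + code e)%N.
Let B := (\max_e code e).+1.
Let d := delta / B%:R.
Let j := (i + B)%N.

(* Positions not of the form [pos e] get a junk edge; no match uses them. *)
Let edge_at k := odflt eps [pick e | k == pos e].

Let edge_at_pos e : edge_at (pos e) = e.
Proof.
rewrite /edge_at; case: pickP => [e' /eqP/addnI/code_inj -> //|/(_ e)].
by rewrite eqxx.
Qed.

Let s' := extend_stream s i d (fun k => (F' (edge_at k).1, F' (edge_at k).2)).
Let M' e := if e \in P then M e else pos e.

Let d_gt0 : 0 < d.
Proof. by rewrite divr_gt0. Qed.

Let s'_incr : increasing_times s'.
Proof. exact: extend_stream_increasing. Qed.

Let etime_s'_j : etime (s' j) = etime (s i) + delta.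
Proof.
by rewrite /s' etime_extend_stream ?leq_addr // addKn mulrCA mulfV ?mulr1 ?pnatr_eq0.
Qed.

Let s'_prefix k : (k <= i)%N -> s' k = s k.
Proof. exact: extend_stream_prefix. Qed.

Let old_edge e : e \in P -> (M e <= i)%N /\ s' (M e) = s (M e).
Proof.
move=> Pe; have Mei : (M e <= i)%N.
  by rewrite -(ler_etime s_incr) -Meps (tc_match_Preq_le match_P).
by rewrite s'_prefix.
Qed.

Let new_edge e : [/\ (i < pos e <= j)%N, esrc (s' (pos e)) = F' e.1
  & edst (s' (pos e)) = F' e.2].
Proof.
have code_lt_B : (code e < B)%N by rewrite ltnS leq_bigmax.
rewrite /s' extend_stream_suffix /= ?edge_at_pos; last by rewrite /pos; lia.
by split=> //; apply/andP; split; rewrite /pos /j; lia.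
Qed.

Let M'_mono e e' : e \in qE Q -> e' \in qE Q -> qprec Q e e' -> (M' e < M' e')%N.
Proof.
move=> Ee Ee' ee'; rewrite /M'.
case: ifP => Pe; case: ifP => Pe'.
- by rewrite -(ltr_etime s_incr); have [_ [_ [_ ->]]] := match_P.
- by have [[Mei _] [/andP[ipos _] _ _]] := (old_edge Pe, new_edge e'); lia.
- by rewrite (Preq_prec_closed Q_po Eeps Ee Pe' ee') in Pe.
- by rewrite ltn_add2l code_mono.
Qed.

Let M'_snapshot e : e \in qE Q -> in_snapshot s' W (etime (s' j)) (M' e).
Proof.
have ti_tj : etime (s i) <= etime (s' j) <= etime (s i) + delta.
  by rewrite etime_s'_j lexx andbT lerDl ltW.
move=> Ee; rewrite /M'; case: ifP => Pe.
  have [_ s'_Me] := old_edge Pe; have [in_P _ _] := match_P.2.2.1 e Pe.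
  by rewrite /in_snapshot s'_Me; exact: delta_slack.
have i_in : in_snapshot s W (etime (s i)) i by rewrite /in_snapshot lexx andbT gtrBl.
have /andP[tj_W _] := delta_slack i_in ti_tj.
have [/andP[ipos posj] _ _] := new_edge e.
rewrite /in_snapshot -(ler_etime s'_incr) in posj; rewrite /in_snapshot posj andbT.
by move: ipos; rewrite -(ltr_etime s'_incr) s'_prefix //; apply: lt_trans.
Qed.

Let tc_match_extension : tc_match s' W (etime (s' j)) Q (qE Q) F' M'.
Proof.
split; first by move=> u v _ _; exact: F'_inj.
split; first by move=> u _; exact: F'_lab.
split=> [e Ee|e e' Ee Ee' ee']; last exact/s'_incr/M'_mono.
move: (M'_snapshot Ee); rewrite /M'; case: ifP => Pe snap.
  have [_ ->] := old_edge Pe; have [_ -> ->] := match_P.2.2.1 e Pe.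
  by rewrite !F'_F ?qverts_src ?qverts_dst.
by have [_ -> ->] := new_edge e.
Qed.

Lemma Preq_match_extends_with : exists s'' j' M'',
  [/\ forall k, (k <= i)%N -> s'' k = s k, increasing_times s'', (i <= j')%N,
      tc_match s'' W (etime (s'' j')) Q (qE Q) F' M'' & M'' eps = i].
Proof.
exists s', j, M'; split=> //; first exact: leq_addr.
by rewrite /M' Preq_id.
Qed.

End PreqMatchExtension.

Lemma Preq_match_extends (L : eqType) (R : realFieldType) (s : stream L R) (W : R)
    (Q : query L) (i : nat) eps F M :
  increasing_times s -> 0 < W -> strict_po Q -> eps \in qE Q ->
  tc_match s W (etime (s i)) Q (Preq Q eps) F M -> M eps = i ->
  exists s' j F' M',
    [/\ forall k, (k <= i)%N -> s' k = s k, increasing_times s', (i <= j)%N,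
        tc_match s' W (etime (s' j)) Q (qE Q) F' M' & M' eps = i].
Proof.
move=> s_incr W_gt0 Q_po Eeps match_P Meps.
have [Q_irr Q_trans] := Q_po.
have [code [code_inj code_mono]] := exists_linear_extension Q_irr Q_trans.
have [F_inj [F_lab _]] := match_P.
have [F' [F'_inj F'_lab F'_F]] := exists_injective_extension F_inj F_lab.
have i_in : in_snapshot s W (etime (s i)) i by rewrite /in_snapshot lexx andbT gtrBl.
have [delta delta_gt0 delta_slack] := snapshot_slack s_incr i_in.
have [s' [j [M' ?]]] := Preq_match_extends_with s_incr W_gt0 Q_po Eeps Meps match_P
  code_inj code_mono F'_inj F'_lab F'_F delta_gt0 delta_slack.
by exists s', j, F', M'.
Qed.

Theorem lemma1 (L : eqType) (R : realFieldType) (s : stream L R) (W : R)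
  (Q : query L) (i : nat) :
  increasing_times s -> 0 < W -> strict_po Q ->
  (~ discardable s W Q i <->
   exists eps, eps \in qE Q /\
     exists F M, tc_match s W (etime (s i)) Q (Preq Q eps) F M /\ M eps = i).
Proof.
move=> s_incr W_gt0 Q_po; split.
  move=> not_disc; apply: NNPP => no_Preq_match; apply: not_disc.
  move=> s' prefix s'_incr j ij F M match_Q eps Eeps Meps; apply: no_Preq_match.
  exists eps; split=> //; exists F, M; split=> //.
  exact: (Preq_match_of_extension s'_incr prefix ij match_Q).
move=> [eps [Eeps [F [M [match_P Meps]]]]] disc.
have [s' [j [F' [M' [prefix s'_incr ij match_Q M'eps]]]]] :=
  Preq_match_extends s_incr W_gt0 Q_po Eeps match_P Meps.
exact: (disc s' prefix s'_incr j ij F' M' match_Q eps Eeps M'eps).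
Qed.
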